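(* Let $m\ge 1$, $n\ge 2$, $d=(n-1)m$, let $\mathcal{H}\in\operatorname{H}^m(\mathbb{C}^n)$ with associated vector $h=(h_0,\dots,h_d)$, and regard $h$ as the symmetric binary tensor in $\operatorname{S}^d(\mathbb{C}^2)$ represented by the binary form $h(x,y)=\sum_{j=0}^d\binom{d}{j}h_jx^jy^{d-j}$. Then $\operatorname{rank}_V(\mathcal{H})=\operatorname{rank}_S(h)$ and $\underline{\operatorname{rank}}_V(\mathcal{H})=\underline{\operatorname{rank}}_S(h)$.
   Context: A tensor $\mathcal{H}\in\operatorname{T}^m(\mathbb{C}^n)$ is Hankel if there is a vector $h=(h_0,\dots,h_{(n-1)m})$ (the associated vector) with $\mathcal{H}_{i_1\dots i_m}=h_{i_1+\cdots+i_m-m}$ for all $1\le i_1,\dots,i_m\le n$; $\operatorname{H}^m(\mathbb{C}^n)$ is the space of such tensors. The binary form $h(x,y)$ is identified with the symmetric tensor $T\in\operatorname{S}^d(\mathbb{C}^2)$ whose entry $T_{i_1\dots i_d}$ ($i_k\in\{1,2\}$) equals $h_j$ where $j$ is the number of indices equal to $1$. Symmetric rank: $\operatorname{rank}_S(\mathcal{A})=\min\{r:\mathcal{A}=\sum_{i=1}^r u_i^{\otimes \mathrm{ord}}\}$; symmetric border rank $\underline{\operatorname{rank}}_S(\mathcal{A})$ is the least $r$ such that $\mathcal{A}$ is a limit of tensors of the form $\sum_{i=1}^r u_i^{\otimes \mathrm{ord}}$. Vandermonde rank $\operatorname{rank}_V(\mathcal{H})$: least $r$ with $\mathcal{H}=\sum_{i=1}^r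 (a_i^{n-1},a_i^{n-2}b_i,\dots,b_i^{n-1})^{\otimes m}$, $a_i,b_i\in\mathbb{C}$. Vandermonde border rank $\underline{\operatorname{rank}}_V(\mathcal{H})$: least $r$ such that $\mathcal{H}$ is a limit of Hankel tensors of Vandermonde rank at most $r$. *)

From Stdlib Require Import Reals List Arith.
Import ListNotations.
Open Scope R_scope.

Definition Cx : Type := (R * R)%type.
Definition C0 : Cx := (0, 0).
Definition C1 : Cx := (1, 0).
Definition Cadd (z w : Cx) : Cx := (fst z + fst w, snd z + snd w).
Definition Copp (z : Cx) : Cx := (- fst z, - snd z).
Definition Cmul (z w : Cx) : Cx :=
  (fst z * fst w - snd z * snd w, fst z * snd w + snd z * fst w).
Fixpoint Cpow (z : Cx) (k : nat) : Cx :=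
  match k with O => C1 | S k' => Cmul z (Cpow z k') end.
Definition Cnorm (z : Cx) : R := sqrt (fst z * fst z + snd z * snd z).

Fixpoint Csum (r : nat) (f : nat -> Cx) : Cx :=
  match r with O => C0 | S r' => Cadd (Csum r' f) (f r') end.

Fixpoint Cprod_list (l : list nat) (v : nat -> Cx) : Cx :=
  match l with [] => C1 | i :: l' => Cmul (v i) (Cprod_list l' v) end.

(** Tensors of order [ord] over Cx^dim: functions on multi-indices
    (lists of length ord, entries in 1..dim, 1-based as in the paper). *)
Definition tensor := list nat -> Cx.

Definition valid_index (ord dim : nat) (l : list nat) : Prop :=
  length l = ord /\ Forall (fun i => (1 <= i <= dim)%nat) l.

Definition teq (ord dim : nat) (A B : tensor) : Prop :=
  forall l, valid_index ord dim l -> A l = B l.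

Definition tpow (u : nat -> Cx) : tensor := fun l => Cprod_list l u.

Definition tsum (r : nat) (T : nat -> tensor) : tensor :=
  fun l => Csum r (fun i => T i l).

Definition is_hankel_with (ord dim : nat) (H : tensor) (h : nat -> Cx) : Prop :=
  forall l, valid_index ord dim l -> H l = h (list_sum l - ord)%nat.

Definition is_hankel (ord dim : nat) (H : tensor) : Prop :=
  exists h, is_hankel_with ord dim H h.

Definition sym_decomp (ord dim : nat) (A : tensor) (r : nat) : Prop :=
  exists u : nat -> nat -> Cx, teq ord dim A (tsum r (fun i => tpow (u i))).

Definition is_rank_S (ord dim : nat) (A : tensor) (r : nat) : Prop :=
  sym_decomp ord dim A r /\ forall r', sym_decomp ord dim A r' -> (r <= r')%nat.

(** Vandermonde vector (a^{n-1}, a^{n-2} b, ..., b^{n-1}), 1-based: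
    entry i is a^{n-i} b^{i-1}. *)
Definition vdm (dim : nat) (a b : Cx) : nat -> Cx :=
  fun i => Cmul (Cpow a (dim - i)) (Cpow b (i - 1)).

Definition vdm_decomp (ord dim : nat) (H : tensor) (r : nat) : Prop :=
  exists a b : nat -> Cx, teq ord dim H (tsum r (fun i => tpow (vdm dim (a i) (b i)))).

Definition is_rank_V (ord dim : nat) (H : tensor) (r : nat) : Prop :=
  vdm_decomp ord dim H r /\ forall r', vdm_decomp ord dim H r' -> (r <= r')%nat.

Definition tconv (ord dim : nat) (T : nat -> tensor) (A : tensor) : Prop :=
  forall l, valid_index ord dim l ->
    forall eps, eps > 0 -> exists N, forall k, (k >= N)%nat ->
      Cnorm (Cadd (T k l) (Copp (A l))) < eps.

Definition sym_border (ord dim : nat) (A : tensor) (r : nat) : Prop :=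
  exists T : nat -> tensor, (forall k, sym_decomp ord dim (T k) r) /\ tconv ord dim T A.

Definition is_border_rank_S (ord dim : nat) (A : tensor) (r : nat) : Prop :=
  sym_border ord dim A r /\ forall r', sym_border ord dim A r' -> (r <= r')%nat.

Definition vdm_border (ord dim : nat) (H : tensor) (r : nat) : Prop :=
  exists T : nat -> tensor,
    (forall k, is_hankel ord dim (T k) /\
               exists r', is_rank_V ord dim (T k) r' /\ (r' <= r)%nat)
    /\ tconv ord dim T H.

Definition is_border_rank_V (ord dim : nat) (H : tensor) (r : nat) : Prop :=
  vdm_border ord dim H r /\ forall r', vdm_border ord dim H r' -> (r <= r')%nat.

Definition binary_tensor (h : nat -> Cx) : tensor :=
  fun l => h (count_occ Nat.eq_dec l 1%nat).

(** A Vandermonde decomposition of the Hankel tensor and a symmetric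
    decomposition of the binary tensor are both determined by the same vector
    of moments [h_j = sum_i a_i^(d-j) b_i^j]: the entry of
    [sum_i vdm(a_i,b_i)^(⊗m)] at a multi-index depends only on its index sum,
    that of [sum_i u_i^(⊗d)] on [u_i] only through its two coordinates and on
    the multi-index only through the number of ones. Hence the two kinds of
    decompositions of a given length correspond, and so do the ranks. For
    border ranks, an approximating sequence is transported entrywise between
    the two index sets, since both tensors are read off the same vector. *)

From Pilot Require Import Defs.
From Stdlib Require Import Reals List Arith Lia Classical.
Import ListNotations.
Open Scope R_scope.

Lemma Cmul_comm z w : Cmul z w = Cmul w z.
Proof. destruct z, w; unfold Cmul; simpl; f_equal; ring. Qed.

Lemma Cmul_assoc z w v : Cmul z (Cmul w v) = Cmul (Cmul z w) v.
Proof. destruct z, w, v; unfold Cmul; simpl; f_equal; ring. Qed.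

Lemma Cmul_1_l z : Cmul Defs.C1 z = z.
Proof. destruct z; unfold Cmul, Defs.C1; simpl; f_equal; ring. Qed.

Lemma Cmul_0_l z : Cmul Defs.C0 z = Defs.C0.
Proof. destruct z; unfold Cmul, Defs.C0; simpl; f_equal; ring. Qed.

Lemma Cadd_0_r z : Cadd z Defs.C0 = z.
Proof. destruct z; unfold Cadd, Defs.C0; simpl; f_equal; ring. Qed.

Lemma Cmul_swap_middle a b c d :
  Cmul (Cmul a b) (Cmul c d) = Cmul (Cmul a c) (Cmul b d).
Proof.
  rewrite <- !Cmul_assoc. f_equal. rewrite !Cmul_assoc. f_equal. apply Cmul_comm.
Qed.

Lemma Cpow_add z p q : Cpow z (p + q) = Cmul (Cpow z p) (Cpow z q).
Proof.
  induction p as [|p IH]; simpl.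
  - now rewrite Cmul_1_l.
  - rewrite IH. apply Cmul_assoc.
Qed.

Lemma Csum_ext r f g :
  (forall i, (i < r)%nat -> f i = g i) -> Csum r f = Csum r g.
Proof.
  induction r as [|r IH]; intros E; simpl; [reflexivity|].
  rewrite IH, E by (intros; try apply E; lia). reflexivity.
Qed.

Lemma list_sum_bounds n l : Forall (fun i => (1 <= i <= n)%nat) l ->
  (length l <= list_sum l <= n * length l)%nat.
Proof. induction 1; simpl; lia. Qed.

Lemma Cprod_list_vdm n a b l : Forall (fun i => (1 <= i <= n)%nat) l ->
  Cprod_list l (vdm n a b) =
  Cmul (Cpow a (n * length l - list_sum l)) (Cpow b (list_sum l - length l)).
Proof.
  intros HF; induction HF as [|i l Hi HF IH]; simpl.
  - rewrite Nat.mul_0_r. simpl. now rewrite Cmul_1_l.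
  - rewrite IH. unfold vdm. rewrite Cmul_swap_middle, <- !Cpow_add.
    pose proof (list_sum_bounds n l HF).
    f_equal; f_equal; nia.
Qed.

Lemma Cprod_list_binary (u : nat -> Cx) l : Forall (fun i => (1 <= i <= 2)%nat) l ->
  Cprod_list l u =
  Cmul (Cpow (u 2%nat) (length l - count_occ Nat.eq_dec l 1%nat))
       (Cpow (u 1%nat) (count_occ Nat.eq_dec l 1%nat)).
Proof.
  intros HF; induction HF as [|i l Hi HF IH]; cbn [Cprod_list length].
  - simpl. now rewrite Cmul_1_l.
  - pose proof (count_occ_bound Nat.eq_dec 1%nat l).
    rewrite IH. assert (i = 1 \/ i = 2)%nat as [-> | ->] by lia.
    + rewrite count_occ_cons_eq by reflexivity.
      replace (S (length l) - S (count_occ Nat.eq_dec l 1))%nat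
        with (length l - count_occ Nat.eq_dec l 1)%nat by lia.
      simpl. rewrite !Cmul_assoc. f_equal. apply Cmul_comm.
    + rewrite count_occ_cons_neq by lia.
      replace (S (length l) - count_occ Nat.eq_dec l 1)%nat
        with (S (length l - count_occ Nat.eq_dec l 1))%nat by lia.
      simpl. apply Cmul_assoc.
Qed.

(** With [h(x,y) = sum_j binom(d,j) h_j x^j y^(d-j)], the binary form
    [sum_i (b_i x + a_i y)^d] has associated vector [binary_moment d r a b]. *)
Definition binary_moment (d r : nat) (a b : nat -> Cx) (j : nat) : Cx :=
  Csum r (fun i => Cmul (Cpow (a i) (d - j)) (Cpow (b i) j)).

Lemma tsum_vdm_moment m n r a b l : valid_index m n l ->
  tsum r (fun i => tpow (vdm n (a i) (b i))) l =
  binary_moment ((n - 1) * m) r a b (list_sum l - m).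
Proof.
  intros [Hl HF]. apply Csum_ext. intros i _.
  unfold tpow. rewrite Cprod_list_vdm by assumption.
  pose proof (list_sum_bounds n l HF).
  rewrite Nat.mul_sub_distr_r. f_equal; f_equal; subst; nia.
Qed.

Lemma tsum_tpow_moment d r (u : nat -> nat -> Cx) l : valid_index d 2 l ->
  tsum r (fun i => tpow (u i)) l =
  binary_moment d r (fun i => u i 2%nat) (fun i => u i 1%nat)
    (count_occ Nat.eq_dec l 1%nat).
Proof.
  intros [Hl HF]. apply Csum_ext. intros i _.
  unfold tpow. rewrite Cprod_list_binary by assumption. now subst.
Qed.

Lemma sym_decomp_mono ord dim A r r' : (1 <= ord)%nat -> (r' <= r)%nat ->
  sym_decomp ord dim A r' -> sym_decomp ord dim A r.
Proof.
  intros Hord Hr [u E].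
  exists (fun i => if (i <? r')%nat then u i else fun _ => Defs.C0).
  intros l Hl. rewrite (E l Hl). unfold tsum.
  induction Hr as [|r Hr IH]; simpl.
  - apply Csum_ext. intros i Hi. now destruct (Nat.ltb_spec i r'); [|lia].
  - rewrite IH. destruct (Nat.ltb_spec r r'); [lia|].
    destruct l as [|i l]; [destruct Hl; simpl in *; lia|].
    unfold tpow. simpl. now rewrite Cmul_0_l, Cadd_0_r.
Qed.

Fixpoint hankel_index (n m j : nat) : list nat :=
  match m with
  | O => []
  | S m' => (1 + Nat.min j (n - 1))%nat :: hankel_index n m' (j - Nat.min j (n - 1))
  end.

Lemma hankel_index_spec n m j : (1 <= n)%nat -> (j <= (n - 1) * m)%nat ->
  valid_index m n (hankel_index n m j) /\
  (list_sum (hankel_index n m j) - m = j)%nat.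
Proof.
  intros Hn; revert j; induction m as [|m IH]; intros j Hj; simpl.
  - repeat split; [constructor | lia].
  - rewrite Nat.mul_succ_r in Hj.
    destruct (IH (j - Nat.min j (n - 1))%nat) as [[Hl HF] Hs];
      [revert Hj; generalize ((n - 1) * m)%nat; lia |].
    pose proof (list_sum_bounds n _ HF).
    repeat split; simpl; [lia | constructor; [lia | assumption] | lia].
Qed.

Definition binary_index (d j : nat) : list nat := repeat 1%nat j ++ repeat 2%nat (d - j).

Lemma binary_index_spec d j : (j <= d)%nat ->
  valid_index d 2 (binary_index d j) /\
  count_occ Nat.eq_dec (binary_index d j) 1%nat = j.
Proof.
  intros Hj. unfold binary_index. repeat split.
  - rewrite length_app, !repeat_length. lia.
  - apply Forall_app. split; apply Forall_forall; intros x Hx;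
      apply repeat_spec in Hx; lia.
  - rewrite count_occ_app, count_occ_repeat_eq, count_occ_repeat_neq by lia. lia.
Qed.

Lemma index_sum_le m n l : valid_index m n l -> (list_sum l - m <= (n - 1) * m)%nat.
Proof.
  intros [Hl HF]. pose proof (list_sum_bounds n l HF).
  rewrite Nat.mul_sub_distr_r. subst. nia.
Qed.

Lemma count_ones_le d l : valid_index d 2 l -> (count_occ Nat.eq_dec l 1%nat <= d)%nat.
Proof. intros [Hl _]. rewrite <- Hl. apply count_occ_bound. Qed.

Definition is_binary_with (d : nat) (S : tensor) (g : nat -> Cx) : Prop :=
  forall l, valid_index d 2 l -> S l = g (count_occ Nat.eq_dec l 1%nat).

Definition hankel_to_binary (n m : nat) (T : tensor) : tensor :=
  fun l => T (hankel_index n m (count_occ Nat.eq_dec l 1%nat)).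

Definition binary_to_hankel (d m : nat) (S : tensor) : tensor :=
  fun l => S (binary_index d (list_sum l - m)).

Lemma sym_decomp_is_binary d S r :
  sym_decomp d 2 S r -> is_binary_with d S (fun j => S (binary_index d j)).
Proof.
  intros [u E] l Hl.
  destruct (binary_index_spec d _ (count_ones_le d l Hl)) as [Hv Hc].
  rewrite (E l Hl), (E _ Hv), (tsum_tpow_moment d _ _ l), (tsum_tpow_moment d _ _ _ Hv)
    by exact Hl.
  now rewrite Hc.
Qed.

Lemma tconv_reindex o d o' d' T A T' A' :
  (forall l', valid_index o' d' l' -> exists l, valid_index o d l /\
     A' l' = A l /\ forall k, T' k l' = T k l) ->
  tconv o d T A -> tconv o' d' T' A'.
Proof.
  intros Hre Hc l' Hl' eps Heps.
  destruct (Hre l' Hl') as (l & Hl & HA & HT).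
  destruct (Hc l Hl eps Heps) as [N HN]. exists N. intros k Hk.
  rewrite HA, HT. now apply HN.
Qed.

Lemma exists_least_le (P : nat -> Prop) r : P r ->
  exists r', (P r' /\ forall r'', P r'' -> (r' <= r'')%nat) /\ (r' <= r)%nat.
Proof.
  intros Pr.
  destruct (dec_inh_nat_subset_has_unique_least_element P (fun k => classic (P k))
              (ex_intro _ r Pr)) as [r' [[Pr' Hleast] _]].
  exists r'. auto.
Qed.

Lemma least_iff (P Q : nat -> Prop) r : (forall k, P k <-> Q k) ->
  (P r /\ forall r', P r' -> (r <= r')%nat) <->
  (Q r /\ forall r', Q r' -> (r <= r')%nat).
Proof. intros E. setoid_rewrite E. reflexivity. Qed.

Section HankelBinary.

Variables m n : nat.
Hypothesis Hn : (1 <= n)%nat.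
Let d := ((n - 1) * m)%nat.

Lemma teq_vdm_iff T g r a b : is_hankel_with m n T g ->
  teq m n T (tsum r (fun i => tpow (vdm n (a i) (b i)))) <->
  forall j, (j <= d)%nat -> g j = binary_moment d r a b j.
Proof.
  intros HT; split.
  - intros E j Hj. destruct (hankel_index_spec n m j) as [Hl Hs]; [lia | exact Hj |].
    rewrite <- Hs at 1. rewrite <- (HT _ Hl), (E _ Hl), (tsum_vdm_moment m n) by exact Hl.
    now rewrite Hs.
  - intros E l Hl. rewrite (HT _ Hl), (tsum_vdm_moment m n) by exact Hl.
    apply E, index_sum_le, Hl.
Qed.

Lemma teq_sym_iff S g r u : is_binary_with d S g ->
  teq d 2 S (tsum r (fun i => tpow (u i))) <->
  forall j, (j <= d)%nat ->
    g j = binary_moment d r (fun i => u i 2%nat) (fun i => u i 1%nat) j.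
Proof.
  intros HS; split.
  - intros E j Hj. destruct (binary_index_spec d j Hj) as [Hl Hc].
    rewrite <- Hc at 1. rewrite <- (HS _ Hl), (E _ Hl), (tsum_tpow_moment d) by exact Hl.
    now rewrite Hc.
  - intros E l Hl. rewrite (HS _ Hl), (tsum_tpow_moment d) by exact Hl.
    apply E, count_ones_le, Hl.
Qed.

Lemma vdm_decomp_iff_sym_decomp T S g r :
  is_hankel_with m n T g -> is_binary_with d S g ->
  vdm_decomp m n T r <-> sym_decomp d 2 S r.
Proof.
  intros HT HS; split.
  - intros (a & b & E).
    exists (fun i k => if Nat.eqb k 1 then b i else a i).
    apply (teq_sym_iff _ _ _ _ HS), (teq_vdm_iff _ _ _ _ _ HT), E.
  - intros [u E]. exists (fun i => u i 2%nat), (fun i => u i 1%nat).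
    apply (teq_vdm_iff _ _ _ _ _ HT), (teq_sym_iff _ _ _ _ HS), E.
Qed.

Lemma hankel_to_binary_is_binary T g :
  is_hankel_with m n T g -> is_binary_with d (hankel_to_binary n m T) g.
Proof.
  intros HT l Hl. unfold hankel_to_binary.
  destruct (hankel_index_spec n m (count_occ Nat.eq_dec l 1%nat)) as [Hv Hs];
    [lia | apply count_ones_le, Hl |].
  now rewrite HT, Hs.
Qed.

Lemma binary_to_hankel_is_hankel S g :
  is_binary_with d S g -> is_hankel_with m n (binary_to_hankel d m S) g.
Proof.
  intros HS l Hl. unfold binary_to_hankel.
  destruct (binary_index_spec d (list_sum l - m)) as [Hv Hc];
    [apply index_sum_le, Hl |].
  now rewrite HS, Hc.
Qed.

Lemma vdm_border_sym_border H h r : (1 <= d)%nat -> is_hankel_with m n H h ->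
  vdm_border m n H r -> sym_border d 2 (binary_tensor h) r.
Proof.
  intros Hd HH (T & HT & Hc).
  exists (fun k => hankel_to_binary n m (T k)). split.
  - intro k. destruct (HT k) as [[g Hg] [r' [[Hdec _] Hle]]].
    apply (sym_decomp_mono _ _ _ _ r' Hd Hle).
    exact (proj1 (vdm_decomp_iff_sym_decomp _ _ _ r' Hg
                    (hankel_to_binary_is_binary _ _ Hg)) Hdec).
  - refine (tconv_reindex _ _ _ _ _ _ _ _ _ Hc). intros l Hl.
    destruct (hankel_index_spec n m (count_occ Nat.eq_dec l 1%nat)) as [Hv Hs];
      [lia | apply count_ones_le, Hl |].
    exists (hankel_index n m (count_occ Nat.eq_dec l 1%nat)).
    split; [exact Hv | split; [| reflexivity]].
    unfold binary_tensor. now rewrite (HH _ Hv), Hs.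
Qed.

Lemma sym_border_vdm_border H h r : is_hankel_with m n H h ->
  sym_border d 2 (binary_tensor h) r -> vdm_border m n H r.
Proof.
  intros HH (S & HS & Hc).
  exists (fun k => binary_to_hankel d m (S k)). split.
  - intro k.
    pose proof (binary_to_hankel_is_hankel _ _ (sym_decomp_is_binary _ _ _ (HS k))) as HT.
    split; [eexists; exact HT |].
    apply exists_least_le.
    apply (vdm_decomp_iff_sym_decomp _ _ _ _ HT (sym_decomp_is_binary _ _ _ (HS k))).
    exact (HS k).
  - refine (tconv_reindex _ _ _ _ _ _ _ _ _ Hc). intros l Hl.
    destruct (binary_index_spec d (list_sum l - m)) as [Hv Hc1];
      [apply index_sum_le, Hl |].
    exists (binary_index d (list_sum l - m)).
    split; [exact Hv | split; [| reflexivity]].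
    unfold binary_tensor. now rewrite (HH _ Hl), Hc1.
Qed.

End HankelBinary.

Theorem lemma3p2 (m n : nat) (Hm : (1 <= m)%nat) (Hn : (2 <= n)%nat)
  (H : tensor) (h : nat -> Cx) (hH : is_hankel_with m n H h) :
  (forall r, is_rank_V m n H r <-> is_rank_S ((n - 1) * m) 2 (binary_tensor h) r) /\
  (forall r, is_border_rank_V m n H r <->
             is_border_rank_S ((n - 1) * m) 2 (binary_tensor h) r).
Proof.
  assert (Hn1 : (1 <= n)%nat) by lia.
  assert (Hd : (1 <= (n - 1) * m)%nat) by nia.
  split; intro r; apply least_iff; intro k.
  - apply (vdm_decomp_iff_sym_decomp m n Hn1) with (g := h); [exact hH | now intros l _].
  - split.
    + exact (vdm_border_sym_border m n Hn1 H h k Hd hH).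
    + exact (sym_border_vdm_border m n Hn1 H h k hH).
Qed.
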